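(* Let $g(\mu)=\mu^2$, let $T,C_1>0$, set $\mu^\ast:=\sqrt{C_1/T}$ (viewed as a constant function on $[0,T]$) and $\tau^\ast:=\sqrt{C_1T}$, and let $\Phi_h^\ast:=\nabla\Phi(\hat z(\tau^\ast))\cdot h(\hat z(\tau^\ast),p)$. If $\Phi_h^\ast>0$, then there exists $\delta>0$ such that $\Phi(z_\mu(T))\le\Phi(z_{\mu^\ast}(T))$ for every $\mu\in C([0,T],(0,\infty))$ with $\int_0^T\mu(t)^2\,\mathrm{d}t=C_1$ and $\sup_{t\in[0,T]}|\mu(t)-\mu^\ast|<\delta$, i.e. $\mu^\ast$ is a local maximizer of $\mu\mapsto\Phi(z_\mu(T))$ on this constraint set. If $\Phi_h^\ast<0$, the same holds with $\ge$ in place of $\le$ (local minimizer).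
   Context: Standing setup: $n,s\ge1$, $p\in\mathbb{R}^s$, $z_0\in\mathbb{R}^n$; $h:\mathbb{R}^n\times\mathbb{R}^s\to\mathbb{R}^n$ is continuously differentiable in its first argument and such that the autonomous initial value problem $\hat z'(\tau)=h(\hat z(\tau),p)$, $\hat z(0)=z_0$ has a unique solution $\hat z$ defined for all $\tau\in\mathbb{R}$. For $T>0$ and $\mu\in C([0,T],\mathbb{R})$, $z_\mu:[0,T]\to\mathbb{R}^n$ denotes the solution of $\dot z(t)=\mu(t)h(z(t),p)$, $z(0)=z_0$. $\Phi:\mathbb{R}^n\to\mathbb{R}$ is continuously differentiable. *)

From Stdlib Require Import Reals Lra Arith.
Open Scope R_scope.

Definition Idx (n : nat) := {i : nat | (i < n)%nat}.
Definition Vec (n : nat) := Idx n -> R.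

Definition vget {n : nat} (v : Vec n) (i : nat) : R :=
  match lt_dec i n with
  | left H => v (exist _ i H)
  | right _ => 0
  end.

Fixpoint sumn (f : nat -> R) (k : nat) : R :=
  match k with O => 0 | S k' => sumn f k' + f k' end.

Definition vsum {n : nat} (v : Vec n) : R := sumn (vget v) n.
Definition vdot {n : nat} (u v : Vec n) : R := vsum (fun i => u i * v i).
(* l^1 norm (all norms on R^n are equivalent) *)
Definition vnorm {n : nat} (v : Vec n) : R := vsum (fun i => Rabs (v i)).
Definition vsub {n : nat} (u v : Vec n) : Vec n := fun i => u i - v i.

Definition vcont {n : nat} (f : Vec n -> R) : Prop :=
  forall x eps, eps > 0 -> exists d, d > 0 /\
    forall y, vnorm (vsub y x) < d -> Rabs (f y - f x) < eps.

Definition vshift {n : nat} (x : Vec n) (j : Idx n) (t : R) : Vec n :=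
  fun k => if Nat.eq_dec (proj1_sig k) (proj1_sig j) then x k + t else x k.

Definition has_partial {n : nat} (f : Vec n -> R) (x : Vec n) (j : Idx n) (l : R) : Prop :=
  derivable_pt_lim (fun t => f (vshift x j t)) 0 l.

Definition C1_with_grad {n : nat} (Phi : Vec n -> R) (grad : Vec n -> Vec n) : Prop :=
  (forall x j, has_partial Phi x j (grad x j)) /\
  (forall j, vcont (fun x => grad x j)).

Definition C1_first_arg {n s : nat} (h : Vec n -> Vec s -> Vec n) : Prop :=
  exists Dh : Vec n -> Vec s -> Idx n -> Idx n -> R,
    forall q : Vec s,
      (forall x i j, has_partial (fun y => h y q i) x j (Dh x q i j)) /\
      (forall i j, vcont (fun x => Dh x q i j)).

Definition is_global_sol {n s : nat} (h : Vec n -> Vec s -> Vec n) (p : Vec s)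
  (z0 : Vec n) (w : R -> Vec n) : Prop :=
  w 0 = z0 /\
  forall t i, derivable_pt_lim (fun u => w u i) t (h (w t) p i).

(* z solves z'(t) = mu(t) h(z(t),p), z(0) = z0 on [0,T]
   (one-sided derivatives at the endpoints) *)
Definition is_sol_on {n s : nat} (h : Vec n -> Vec s -> Vec n) (p : Vec s)
  (z0 : Vec n) (T : R) (mu : R -> R) (z : R -> Vec n) : Prop :=
  z 0 = z0 /\
  forall t, 0 <= t <= T -> forall (i : Idx n) eps, eps > 0 ->
    exists d, d > 0 /\ forall u, 0 <= u <= T -> u <> t -> Rabs (u - t) < d ->
      Rabs ((z u i - z t i) / (u - t) - mu t * h (z t) p i) < eps.

Definition cont_pos_on (T : R) (mu : R -> R) : Prop :=
  (forall t, 0 <= t <= T -> mu t > 0) /\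
  (forall t, 0 <= t <= T -> forall eps, eps > 0 -> exists d, d > 0 /\
     forall u, 0 <= u <= T -> Rabs (u - t) < d -> Rabs (mu u - mu t) < eps).

Definition energy_eq (T C1 : R) (mu : R -> R) : Prop :=
  exists pr : Riemann_integrable (fun t => mu t ^ 2) 0 T, RiemannInt pr = C1.

Definition sup_dist_lt (T : R) (mu : R -> R) (c delta : R) : Prop :=
  exists M, M < delta /\ forall t, 0 <= t <= T -> Rabs (mu t - c) <= M.

From Stdlib Require Import Reals Lra Lia Arith FunctionalExtensionality Classical.
From Coquelicot Require Import Coquelicot.
Open Scope R_scope.

(* Substituting tau = int_0^t mu turns the controlled system into the autonomous one, so
   z_mu(T) = zhat(int_0^T mu).  Under the constraint int_0^T mu^2 = C1, Cauchy-Schwarz gives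
   int_0^T mu <= sqrt (C1 T) = taustar, with equality for mu = mustar, and int_0^T mu tends to
   taustar as mu tends to mustar uniformly.  So Phi(z_mu(T)) = Phi(zhat tau) for some tau <= taustar
   close to taustar, and the sign of (Phi o zhat)'(taustar) = Phih decides the comparison with
   Phi(z_mustar(T)) = Phi(zhat taustar). *)

(** * Finite sums and vectors *)

Lemma sumn_ext f g K : (forall k, (k < K)%nat -> f k = g k) -> sumn f K = sumn g K.
Proof.
  induction K as [|K IH]; intros Hfg; simpl; auto.
  rewrite IH, Hfg; auto.
Qed.

Lemma sumn_add f g K : sumn (fun k => f k + g k) K = sumn f K + sumn g K.
Proof. induction K as [|K IH]; simpl; [ring | rewrite IH; ring]. Qed.

Lemma sumn_scal c f K : sumn (fun k => c * f k) K = c * sumn f K.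
Proof. induction K as [|K IH]; simpl; [ring | rewrite IH; ring]. Qed.

Lemma sumn_const c K : sumn (fun _ => c) K = INR K * c.
Proof. induction K as [|K IH]; [simpl; ring |]. rewrite S_INR; cbn [sumn]; rewrite IH; ring. Qed.

Lemma sumn_telescope (a : nat -> R) K : sumn (fun k => a (S k) - a k) K = a K - a O.
Proof. induction K as [|K IH]; simpl; [ring | rewrite IH; ring]. Qed.

Lemma sumn_le f g K : (forall k, (k < K)%nat -> f k <= g k) -> sumn f K <= sumn g K.
Proof.
  induction K as [|K IH]; intros Hfg; simpl; [lra |].
  assert (f K <= g K) by auto.
  assert (sumn f K <= sumn g K) by auto.
  lra.
Qed.

Lemma sumn_abs f K : Rabs (sumn f K) <= sumn (fun k => Rabs (f k)) K.
Proof.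
  induction K as [|K IH]; simpl; [rewrite Rabs_R0; lra |].
  eapply Rle_trans; [apply Rabs_triang | lra].
Qed.

Lemma sumn_nonneg f K : (forall k, (k < K)%nat -> 0 <= f k) -> 0 <= sumn f K.
Proof. intros. rewrite <- (Rmult_0_r (INR K)), <- sumn_const. apply sumn_le; auto. Qed.

Lemma sumn_ge_term f K k : (forall k, (k < K)%nat -> 0 <= f k) -> (k < K)%nat -> f k <= sumn f K.
Proof.
  induction K as [|K IH]; intros Hf Hk; [lia |]. simpl.
  assert (0 <= f K) by auto.
  destruct (Nat.eq_dec k K) as [-> | Hne].
  - assert (0 <= sumn f K) by (apply sumn_nonneg; auto). lra.
  - assert (f k <= sumn f K) by (apply IH; auto; lia). lra.
Qed.

Lemma sumn_sqr_le f K : (sumn f K)^2 <= INR K * sumn (fun k => f k * f k) K.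
Proof.
  induction K as [|K IH]; [simpl; lra |].
  rewrite S_INR; cbn [sumn].
  set (S := sumn f K) in *. set (Q := sumn (fun k => f k * f k) K) in *.
  assert (0 <= Q) by (apply sumn_nonneg; intros; nra).
  assert (0 <= INR K) by apply pos_INR.
  assert (2 * S * f K <= Q + INR K * (f K * f K)).
  { destruct (Req_dec (INR K) 0) as [HK | HK].
    - assert (S = 0) by (rewrite HK in IH; nra). rewrite HK; nra.
    - apply (Rmult_le_reg_l (INR K)); [lra |].
      assert (0 <= (INR K * f K - S)^2) by apply pow2_ge_0. nra. }
  nra.
Qed.

Lemma sumn_derive (F : R -> nat -> R) (F' : nat -> R) t K :
  (forall k, derivable_pt_lim (fun u => F u k) t (F' k)) ->
  derivable_pt_lim (fun u => sumn (F u) K) t (sumn F' K).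
Proof.
  intros HF. induction K as [|K IH]; simpl.
  - apply derivable_pt_lim_const.
  - apply (derivable_pt_lim_plus (fun u => sumn (F u) K) (fun u => F u K)); auto.
Qed.

Lemma Idx_eq {n} (i j : Idx n) : proj1_sig i = proj1_sig j -> i = j.
Proof.
  destruct i as [i Hi], j as [j Hj]; simpl; intros ->.
  f_equal; apply Peano_dec.le_unique.
Qed.

Lemma vget_Idx {n} (v : Vec n) (j : Idx n) : vget v (proj1_sig j) = v j.
Proof.
  unfold vget; destruct (lt_dec (proj1_sig j) n) as [H | H].
  - f_equal; apply Idx_eq; reflexivity.
  - destruct (H (proj2_sig j)).
Qed.

Section Vectors.
Context {n : nat}.

Lemma vsum_ext (u v : Vec n) : (forall i, u i = v i) -> vsum u = vsum v.
Proof. intros; apply sumn_ext; intros; unfold vget; destruct lt_dec; auto. Qed.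

Lemma vsum_le (u v : Vec n) : (forall i, u i <= v i) -> vsum u <= vsum v.
Proof. intros; apply sumn_le; intros; unfold vget; destruct lt_dec; auto; lra. Qed.

Lemma vsum_add (u v : Vec n) : vsum (fun i => u i + v i) = vsum u + vsum v.
Proof.
  unfold vsum; rewrite <- sumn_add.
  apply sumn_ext; intros; unfold vget; destruct lt_dec; auto; ring.
Qed.

Lemma vsum_scal c (u : Vec n) : vsum (fun i => c * u i) = c * vsum u.
Proof.
  unfold vsum; rewrite <- sumn_scal.
  apply sumn_ext; intros; unfold vget; destruct lt_dec; auto; ring.
Qed.

Lemma vsum_abs (u : Vec n) : Rabs (vsum u) <= vsum (fun i => Rabs (u i)).
Proof.
  eapply Rle_trans; [apply sumn_abs |].
  apply sumn_le; intros; unfold vget; destruct lt_dec; [lra | rewrite Rabs_R0; lra].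
Qed.

Lemma vsum_le_const (u : Vec n) M : (forall i, u i <= M) -> vsum u <= INR n * M.
Proof.
  intros; unfold vsum; rewrite <- sumn_const.
  apply sumn_le; intros; unfold vget; destruct lt_dec; auto; lia.
Qed.

Lemma vsum_nonneg (u : Vec n) : (forall i, 0 <= u i) -> 0 <= vsum u.
Proof. intros; apply sumn_nonneg; intros; unfold vget; destruct lt_dec; auto; lra. Qed.

Lemma vsum_ge_term (u : Vec n) j : (forall i, 0 <= u i) -> u j <= vsum u.
Proof.
  intros Hu. rewrite <- vget_Idx. apply sumn_ge_term; [| exact (proj2_sig j)].
  intros; unfold vget; destruct lt_dec; auto; lra.
Qed.

Lemma vsum_derive (F : R -> Vec n) (F' : Vec n) t :
  (forall i, derivable_pt_lim (fun u => F u i) t (F' i)) ->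
  derivable_pt_lim (fun u => vsum (F u)) t (vsum F').
Proof.
  intros HF. apply (sumn_derive (fun u => vget (F u))). intros k.
  unfold vget; destruct lt_dec; [apply HF | apply derivable_pt_lim_const].
Qed.

Lemma vnorm_ge0 (v : Vec n) : 0 <= vnorm v.
Proof. apply vsum_nonneg; intros; apply Rabs_pos. Qed.

Lemma Rabs_le_vnorm (v : Vec n) j : Rabs (v j) <= vnorm v.
Proof. apply (vsum_ge_term (fun i => Rabs (v i))); intros; apply Rabs_pos. Qed.

Lemma vnorm_triangle (x y z : Vec n) : vnorm (vsub x z) <= vnorm (vsub x y) + vnorm (vsub y z).
Proof.
  unfold vnorm; rewrite <- vsum_add; apply vsum_le; intros i; unfold vsub.
  replace (x i - z i) with ((x i - y i) + (y i - z i)) by ring; apply Rabs_triang.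
Qed.

Lemma vnorm_sym (x y : Vec n) : vnorm (vsub x y) = vnorm (vsub y x).
Proof. apply vsum_ext; intros; apply Rabs_minus_sym. Qed.

Lemma vnorm_subvv (x : Vec n) : vnorm (vsub x x) = 0.
Proof.
  unfold vnorm. rewrite <- (Rmult_0_l (vsum (fun _ : Idx n => 0))), <- vsum_scal.
  apply vsum_ext; intros; unfold vsub; rewrite Rminus_diag, Rabs_R0; ring.
Qed.

Lemma vnorm_le0_eq (x y : Vec n) : vnorm (vsub x y) <= 0 -> x = y.
Proof.
  intros H. apply functional_extensionality; intros i.
  pose proof (Rabs_le_vnorm (vsub x y) i) as Hi; change (vsub x y i) with (x i - y i) in Hi.
  pose proof (Rabs_pos (x i - y i)).
  destruct (Req_dec (x i - y i) 0); [lra |].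
  pose proof (Rabs_pos_lt _ H1); lra.
Qed.

Lemma Rabs_vdot_le (c d : Vec n) : Rabs (vdot c d) <= vnorm c * vnorm d.
Proof.
  eapply Rle_trans; [apply vsum_abs |].
  unfold vnorm at 2; rewrite <- vsum_scal. apply vsum_le; intros i.
  rewrite Rabs_mult. apply Rmult_le_compat_r; [apply Rabs_pos | apply Rabs_le_vnorm].
Qed.

Lemma vdot_sub_scal (c a b : Vec n) k :
  vdot c (fun i => a i - k * b i) = vdot c a - k * vdot c b.
Proof.
  unfold vdot. rewrite <- vsum_scal.
  replace (vsum (fun i => c i * a i) - vsum (fun i => k * (c i * b i)))
    with (vsum (fun i => c i * a i) + -1 * vsum (fun i => k * (c i * b i))) by ring.
  rewrite <- vsum_scal, <- vsum_add. apply vsum_ext; intros; ring.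
Qed.

Lemma vdot_self_le (e : Vec n) : vdot e e <= vnorm e * vnorm e.
Proof.
  unfold vdot, vnorm at 2; rewrite <- vsum_scal. apply vsum_le; intros i.
  rewrite <- (Rabs_pos_eq (e i * e i)) by apply Rle_0_sqr. rewrite Rabs_mult.
  apply Rmult_le_compat_r; [apply Rabs_pos | apply Rabs_le_vnorm].
Qed.

Lemma vnorm_sqr_le (e : Vec n) : (vnorm e)^2 <= INR n * vdot e e.
Proof.
  eapply Rle_trans; [apply sumn_sqr_le |].
  apply Rmult_le_compat_l; [apply pos_INR |]. apply Req_le, sumn_ext; intros k Hk.
  unfold vget; destruct lt_dec; [| lia].
  rewrite <- Rabs_mult, Rabs_pos_eq; [reflexivity | apply Rle_0_sqr].
Qed.

Lemma Idx_uniform_delta (P : Idx n -> R -> Prop) :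
  (forall i d d', P i d -> 0 < d' <= d -> P i d') ->
  (forall i, exists d, d > 0 /\ P i d) -> exists d, d > 0 /\ forall i, P i d.
Proof.
  intros Hmono Hex.
  assert (Hk : forall K, exists d, d > 0 /\ forall i, (proj1_sig i < K)%nat -> P i d).
  { induction K as [|K [d [Hd HK]]].
    - exists 1; split; [lra | intros; lia].
    - destruct (lt_dec K n) as [HKn | HKn].
      + destruct (Hex (exist _ K HKn)) as [d' [Hd' HP]].
        exists (Rmin d d'); split; [apply Rmin_glb_lt; lra |].
        assert (Hmin : 0 < Rmin d d') by (apply Rmin_glb_lt; lra).
        intros i Hi. destruct (Nat.eq_dec (proj1_sig i) K) as [He | He].
        * rewrite (Idx_eq i (exist _ K HKn) He).
          apply (Hmono _ d'); [exact HP | split; [lra | apply Rmin_r]].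
        * apply (Hmono _ d); [apply HK; lia | split; [lra | apply Rmin_l]].
      + exists d; split; auto. intros i _. apply HK. pose proof (proj2_sig i); simpl in *; lia. }
  destruct (Hk n) as [d [Hd HP]]. exists d; split; auto. intros i; apply HP, (proj2_sig i).
Qed.

End Vectors.

(** * Differentiation on R^n *)

Lemma derivable_pt_lim_approx F t l : derivable_pt_lim F t l ->
  forall eps, eps > 0 -> exists d, d > 0 /\
    forall k, Rabs k < d -> Rabs (F (t + k) - F t - l * k) <= eps * Rabs k.
Proof.
  intros HF eps Heps. destruct (HF eps Heps) as [d Hd].
  exists (pos d); split; [apply cond_pos |]. intros k Hk.
  destruct (Req_dec k 0) as [-> | Hk0].
  - rewrite Rplus_0_r, Rabs_R0. replace (F t - F t - l * 0) with 0 by ring. rewrite Rabs_R0; lra.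
  - replace (F (t + k) - F t - l * k) with (((F (t + k) - F t) / k - l) * k) by (field; auto).
    rewrite Rabs_mult. apply Rmult_le_compat_r; [apply Rabs_pos | left; auto].
Qed.

Lemma approx_derivable_pt_lim F t l :
  (forall eps, eps > 0 -> exists d, d > 0 /\
     forall k, Rabs k < d -> Rabs (F (t + k) - F t - l * k) <= eps * Rabs k) ->
  derivable_pt_lim F t l.
Proof.
  intros HF eps Heps. destruct (HF (eps / 2) ltac:(lra)) as [d [Hd Hk]].
  exists (mkposreal d Hd). intros k Hk0 Hkd.
  assert (Hpos : 0 < Rabs k) by (apply Rabs_pos_lt; auto).
  replace ((F (t + k) - F t) / k - l) with ((F (t + k) - F t - l * k) / k) by (field; auto).
  unfold Rdiv; rewrite Rabs_mult, Rabs_inv.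
  apply (Rmult_lt_reg_r (Rabs k)); auto. rewrite Rmult_assoc, Rinv_l by lra.
  specialize (Hk k Hkd). nra.
Qed.

Lemma derivable_pt_lim_pos_left_le F a l : derivable_pt_lim F a l -> l > 0 ->
  exists eps, eps > 0 /\ forall t, a - eps < t <= a -> F t <= F a.
Proof.
  intros HF Hl. destruct (derivable_pt_lim_approx F a l HF l Hl) as [d [Hd Hk]].
  exists d; split; auto. intros t Ht.
  specialize (Hk (t - a) ltac:(rewrite Rabs_left1; lra)).
  replace (a + (t - a)) with t in Hk by ring.
  rewrite (Rabs_left1 (t - a)) in Hk by lra.
  pose proof (Rle_abs (F t - F a - l * (t - a))). lra.
Qed.

Section Increments.
Context {n : nat}.

Definition mix (x y : Vec n) (k : nat) : Vec n :=
  fun i => if lt_dec (proj1_sig i) k then y i else x i.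

Lemma mix_0 x y : mix x y 0 = x.
Proof. apply functional_extensionality; intros; unfold mix; destruct lt_dec; auto; lia. Qed.

Lemma mix_n x y : mix x y n = y.
Proof.
  apply functional_extensionality; intros i; unfold mix; destruct lt_dec as [_ | Hi]; auto.
  destruct (Hi (proj2_sig i)).
Qed.

Lemma mix_S x y j : mix x y (S (proj1_sig j)) = vshift (mix x y (proj1_sig j)) j (y j - x j).
Proof.
  apply functional_extensionality; intros i; unfold mix, vshift.
  destruct (Nat.eq_dec (proj1_sig i) (proj1_sig j)) as [e | e].
  - rewrite (Idx_eq i j e). do 2 (destruct lt_dec; try lia). ring.
  - do 2 destruct lt_dec; auto; lia.
Qed.

Lemma vshift_0 (x : Vec n) j : vshift x j 0 = x.
Proof. apply functional_extensionality; intros i; unfold vshift; destruct Nat.eq_dec; ring. Qed.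

Lemma vshift_vshift (x : Vec n) j t u : vshift (vshift x j t) j u = vshift x j (t + u).
Proof. apply functional_extensionality; intros i; unfold vshift; destruct Nat.eq_dec; ring. Qed.

Variables (f : Vec n -> R) (g : Vec n -> Vec n).
Hypothesis Hpartial : forall x j, has_partial f x j (g x j).

Lemma derivable_pt_lim_vshift x j t :
  derivable_pt_lim (fun t => f (vshift x j t)) t (g (vshift x j t) j).
Proof.
  intros eps Heps. destruct (Hpartial (vshift x j t) j eps Heps) as [d Hd].
  exists d. intros k Hk Hkd. specialize (Hd k Hk Hkd).
  rewrite vshift_vshift, Rplus_0_l, vshift_0 in Hd. exact Hd.
Qed.

Lemma vshift_increment_le x j d c eps :
  (forall th, (0 <= th <= d \/ d <= th <= 0) -> Rabs (g (vshift x j th) j - c) <= eps) ->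
  Rabs (f (vshift x j d) - f x - c * d) <= eps * Rabs d.
Proof.
  intros Hg.
  assert (Heps : 0 <= eps) by (eapply Rle_trans; [apply Rabs_pos | apply (Hg 0); lra]).
  destruct (Rtotal_order d 0) as [Hd | [-> | Hd]].
  - destruct (MVT_cor2 (fun t => f (vshift x j t)) (fun t => g (vshift x j t) j) d 0 Hd)
      as [th [Hmvt Hth]]; [intros; apply derivable_pt_lim_vshift |].
    rewrite vshift_0 in Hmvt.
    replace (f (vshift x j d) - f x - c * d) with ((g (vshift x j th) j - c) * d) by lra.
    rewrite Rabs_mult. apply Rmult_le_compat_r; [apply Rabs_pos | apply Hg; lra].
  - rewrite vshift_0, Rabs_R0. replace (f x - f x - c * 0) with 0 by ring. rewrite Rabs_R0; lra.
  - destruct (MVT_cor2 (fun t => f (vshift x j t)) (fun t => g (vshift x j t) j) 0 d Hd)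
      as [th [Hmvt Hth]]; [intros; apply derivable_pt_lim_vshift |].
    rewrite vshift_0 in Hmvt.
    replace (f (vshift x j d) - f x - c * d) with ((g (vshift x j th) j - c) * d) by lra.
    rewrite Rabs_mult. apply Rmult_le_compat_r; [apply Rabs_pos | apply Hg; lra].
Qed.

(* Walk from x to y one coordinate at a time; every intermediate point stays in the l^1 ball
   around x0 of radius |x - x0| + |y - x0|. *)
Lemma increment_le x0 x y c eps :
  (forall xi, vnorm (vsub xi x0) <= vnorm (vsub x x0) + vnorm (vsub y x0) ->
     forall j, Rabs (g xi j - c j) <= eps) ->
  Rabs (f y - f x - vdot c (vsub y x)) <= eps * vnorm (vsub y x).
Proof.
  intros Hg.
  rewrite <- (mix_0 x y), <- (mix_n x y) at 1.
  rewrite <- (sumn_telescope (fun k => f (mix x y k))).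
  unfold vdot, vnorm, vsum. rewrite <- sumn_scal.
  replace (sumn (fun k => f (mix x y (S k)) - f (mix x y k)) n -
           sumn (vget (fun i => c i * vsub y x i)) n)
    with (sumn (fun k => f (mix x y (S k)) - f (mix x y k)) n +
          -1 * sumn (vget (fun i => c i * vsub y x i)) n) by ring.
  rewrite <- sumn_scal, <- sumn_add.
  eapply Rle_trans; [apply sumn_abs |]. apply sumn_le; intros k Hk.
  unfold vget. destruct lt_dec as [Hl | Hl]; [| lia].
  set (j := exist (fun i => (i < n)%nat) k Hl). change k with (proj1_sig j).
  rewrite mix_S.
  replace (f (vshift (mix x y (proj1_sig j)) j (y j - x j)) - f (mix x y (proj1_sig j)) +
           -1 * (c j * vsub y x j))
    with (f (vshift (mix x y (proj1_sig j)) j (y j - x j)) - f (mix x y (proj1_sig j)) -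
          c j * (y j - x j)) by (unfold vsub; ring).
  apply vshift_increment_le. intros th Hth. apply Hg.
  change (vsub y x j) with (y j - x j) in Hth.
  unfold vnorm; rewrite <- vsum_add. apply vsum_le; intros i.
  unfold vsub, vshift, mix.
  pose proof (Rabs_pos (x i - x0 i)). pose proof (Rabs_pos (y i - x0 i)).
  destruct (Nat.eq_dec (proj1_sig i) (proj1_sig j)) as [e | e].
  - rewrite (Idx_eq i j e). destruct lt_dec; [lia |].
    unfold Rabs; repeat destruct Rcase_abs; lra.
  - destruct lt_dec; lra.
Qed.

Hypothesis Hgrad_cont : forall j, vcont (fun x => g x j).

Lemma increment_near x0 eps : eps > 0 -> exists r, r > 0 /\
  forall x y, vnorm (vsub x x0) < r -> vnorm (vsub y x0) < r ->
    Rabs (f y - f x - vdot (g x0) (vsub y x)) <= eps * vnorm (vsub y x).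
Proof.
  intros Heps.
  destruct (Idx_uniform_delta
      (fun j r => forall xi, vnorm (vsub xi x0) < r -> Rabs (g xi j - g x0 j) <= eps))
    as [r [Hr Hnear]].
  - intros j d d' Hd Hd' xi Hxi. apply Hd; lra.
  - intros j. destruct (Hgrad_cont j x0 eps Heps) as [d [Hd Hnear]].
    exists d; split; auto. intros; left; auto.
  - exists (r / 2); split; [lra |]. intros x y Hx Hy.
    apply (increment_le x0). intros xi Hxi j. apply Hnear. lra.
Qed.

End Increments.

Definition locally_lipschitz {n : nat} (F : Vec n -> Vec n) : Prop :=
  forall x0, exists r L, r > 0 /\ 0 <= L /\ forall x y,
    vnorm (vsub x x0) < r -> vnorm (vsub y x0) < r ->
    vnorm (vsub (F y) (F x)) <= L * vnorm (vsub y x).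

Lemma C1_locally_lipschitz {n : nat} (F : Vec n -> Vec n) (D : Vec n -> Idx n -> Idx n -> R) :
  (forall x i j, has_partial (fun y => F y i) x j (D x i j)) ->
  (forall i j, vcont (fun x => D x i j)) ->
  locally_lipschitz F.
Proof.
  intros Hpartial Hcont x0.
  destruct (Idx_uniform_delta (fun i r => forall x y,
      vnorm (vsub x x0) < r -> vnorm (vsub y x0) < r ->
      Rabs (F y i - F x i) <= (vnorm (D x0 i) + 1) * vnorm (vsub y x))) as [r [Hr Hcoord]].
  - intros i d d' Hd Hd' x y Hx Hy. apply Hd; lra.
  - intros i.
    destruct (increment_near _ _ (fun x j => Hpartial x i j) (Hcont i) x0 1 ltac:(lra))
      as [r [Hr Hinc]].
    exists r; split; auto. intros x y Hx Hy. specialize (Hinc x y Hx Hy).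
    pose proof (Rabs_vdot_le (D x0 i) (vsub y x)).
    pose proof (Rabs_triang_inv (F y i - F x i) (vdot (D x0 i) (vsub y x))).
    change (fun j => D x0 i j) with (D x0 i) in Hinc.
    nra.
  - exists r, (vsum (fun i => vnorm (D x0 i) + 1)). split; [auto | split].
    + apply vsum_nonneg; intros i; pose proof (vnorm_ge0 (D x0 i)); lra.
    + intros x y Hx Hy. rewrite Rmult_comm, <- vsum_scal. apply vsum_le; intros i.
      rewrite Rmult_comm. apply Hcoord; auto.
Qed.

Lemma vec_derivable_approx {n : nat} (z : R -> Vec n) t (v : Vec n) :
  (forall i, derivable_pt_lim (fun u => z u i) t (v i)) ->
  forall eps, eps > 0 -> exists d, d > 0 /\ forall k, Rabs k < d ->
    vnorm (fun i => z (t + k) i - z t i - k * v i) <= eps * Rabs k.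
Proof.
  intros Hz eps Heps.
  assert (HN : 0 <= INR n) by apply pos_INR.
  set (e := eps / (INR n + 1)).
  assert (He : e > 0) by (apply Rdiv_lt_0_compat; lra).
  destruct (Idx_uniform_delta (fun i d => forall k, Rabs k < d ->
      Rabs (z (t + k) i - z t i - v i * k) <= e * Rabs k)) as [d [Hd Hcoord]].
  - intros i d d' Hdi Hd' k Hk. apply Hdi; lra.
  - intros i. exact (derivable_pt_lim_approx _ t (v i) (Hz i) e He).
  - exists d; split; auto. intros k Hk.
    apply Rle_trans with (INR n * (e * Rabs k)).
    + apply vsum_le_const; intros i. rewrite Rmult_comm with (r1 := k). auto.
    + assert (INR n * e <= eps) by (unfold e; apply (Rmult_le_reg_r (INR n + 1)); [lra |];
        field_simplify; nra).
      pose proof (Rabs_pos k). nra.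
Qed.

Lemma vnorm_increment_le {n : nat} (z : R -> Vec n) t (v : Vec n) k e :
  vnorm (fun i => z (t + k) i - z t i - k * v i) <= e * Rabs k ->
  vnorm (vsub (z (t + k)) (z t)) <= Rabs k * (vnorm v + e).
Proof.
  intros Herr.
  apply Rle_trans with (vnorm (fun i => z (t + k) i - z t i - k * v i) + Rabs k * vnorm v); [| lra].
  unfold vnorm. rewrite <- vsum_scal, <- vsum_add. apply vsum_le; intros i.
  rewrite <- Rabs_mult. unfold vsub.
  replace (z (t + k) i - z t i) with ((z (t + k) i - z t i - k * v i) + k * v i) at 1 by ring.
  apply Rabs_triang.
Qed.

Lemma chain_rule {n : nat} (Phi : Vec n -> R) (g : Vec n -> Vec n)
  (Hpartial : forall x j, has_partial Phi x j (g x j)) (Hcont : forall j, vcont (fun x => g x j))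
  (z : R -> Vec n) t (v : Vec n) :
  (forall i, derivable_pt_lim (fun u => z u i) t (v i)) ->
  derivable_pt_lim (fun u => Phi (z u)) t (vdot (g (z t)) v).
Proof.
  intros Hz. apply approx_derivable_pt_lim. intros eps Heps.
  set (c := g (z t)). set (A := vnorm c). set (B := vnorm v).
  assert (HA : 0 <= A) by apply vnorm_ge0. assert (HB : 0 <= B) by apply vnorm_ge0.
  set (e1 := eps / (2 * (B + 2))). set (e2 := Rmin 1 (eps / (2 * (A + 1)))).
  assert (He1 : e1 > 0) by (apply Rdiv_lt_0_compat; lra).
  assert (He2 : e2 > 0) by (apply Rmin_glb_lt; [lra | apply Rdiv_lt_0_compat; lra]).
  assert (He2_1 : e2 <= 1) by apply Rmin_l.
  assert (HAe2 : A * e2 <= eps / 2).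
  { assert (e2 * (A + 1) <= eps / 2).
    { apply Rle_trans with (eps / (2 * (A + 1)) * (A + 1)); [apply Rmult_le_compat_r; [lra | apply Rmin_r] |].
      right; field; lra. }
    nra. }
  assert (HBe1 : e1 * (B + 1) <= eps / 2).
  { apply Rle_trans with (e1 * (B + 2)); [apply Rmult_le_compat_l; lra |]. right; unfold e1; field; lra. }
  destruct (increment_near Phi g Hpartial Hcont (z t) e1 He1) as [r [Hr Hinc]].
  destruct (vec_derivable_approx z t v Hz e2 He2) as [d [Hd Happrox]].
  exists (Rmin d (r / (B + 2))); split.
  { apply Rmin_glb_lt; [lra | apply Rdiv_lt_0_compat; lra]. }
  intros k Hk.
  assert (Hkd : Rabs k < d) by (eapply Rlt_le_trans; [exact Hk | apply Rmin_l]).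
  assert (Hkr : Rabs k * (B + 2) < r).
  { apply Rlt_le_trans with (r / (B + 2) * (B + 2)); [| right; field; lra].
    apply Rmult_lt_compat_r; [lra |]. eapply Rlt_le_trans; [exact Hk | apply Rmin_r]. }
  set (D := vsub (z (t + k)) (z t)).
  assert (Herr := Happrox k Hkd).
  assert (HD : vnorm D <= Rabs k * (B + 1)).
  { pose proof (vnorm_increment_le z t v k e2 Herr). pose proof (Rabs_pos k). fold D B in H. nra. }
  assert (HDr : vnorm (vsub (z (t + k)) (z t)) < r) by (pose proof (Rabs_pos k); fold D; nra).
  specialize (Hinc (z t) (z (t + k))). rewrite vnorm_subvv in Hinc.
  specialize (Hinc Hr HDr). fold c D in Hinc.
  pose proof (Rabs_vdot_le c (fun i => z (t + k) i - z t i - k * v i)) as Hlin.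
  rewrite vdot_sub_scal in Hlin. fold A in Hlin.
  (* Linearisation error of [Phi] at [z t], plus [c] applied to that of [z] at [t]. *)
  replace (Phi (z (t + k)) - Phi (z t) - vdot c v * k)
    with ((Phi (z (t + k)) - Phi (z t) - vdot c D) + (vdot c D - k * vdot c v)) by ring.
  eapply Rle_trans; [apply Rabs_triang |].
  pose proof (Rabs_pos k).
  assert (e1 * vnorm D <= eps / 2 * Rabs k) by nra.
  assert (A * vnorm (fun i => z (t + k) i - z t i - k * v i) <= eps / 2 * Rabs k) by nra.
  change (vdot c (fun i => z (t + k) i - z t i)) with (vdot c D) in Hlin.
  lra.
Qed.

(** * Uniqueness for the time-dependent equation *)

Lemma nonpos_of_right_limit (G Gd : R -> R) t0 t1 :
  (forall c, t0 < c <= t1 -> derivable_pt_lim G c (Gd c) /\ Gd c <= 0) ->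
  (forall eps, eps > 0 -> exists d, d > 0 /\ forall u, t0 < u < t0 + d -> G u < eps) ->
  forall t, t0 < t <= t1 -> G t <= 0.
Proof.
  intros HG Hlim t Ht. apply Rnot_lt_le; intros Hpos.
  destruct (Hlim (G t) Hpos) as [d [Hd Hnear]].
  set (a := t0 + Rmin d (t - t0) / 2).
  assert (Ha : t0 < a < t /\ a < t0 + d) by (unfold a, Rmin; destruct Rle_dec; lra).
  destruct (MVT_cor2 G Gd a t ltac:(lra)) as [c [Hmvt Hc]]; [intros c Hc; apply HG; lra |].
  assert (Gd c <= 0) by (apply HG; lra).
  assert (G a < G t) by (apply Hnear; lra).
  nra.
Qed.

(* Gronwall: [exp (-K (u - t0)) V u] is nonincreasing on [(t0, t1]] and tends to 0 at [t0]. *)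
Lemma gronwall_zero (V Vd : R -> R) K t0 t1 : 0 <= K ->
  (forall u, 0 <= V u) ->
  (forall eps, eps > 0 -> exists d, d > 0 /\ forall u, t0 < u < t0 + d -> V u < eps) ->
  (forall c, t0 < c <= t1 -> derivable_pt_lim V c (Vd c) /\ Vd c <= K * V c) ->
  forall t, t0 < t <= t1 -> V t = 0.
Proof.
  intros HK HV Hlim HVd t Ht.
  set (E := fun u => exp (- K * (u - t0))).
  assert (HE : forall u, t0 <= u -> 0 < E u <= 1).
  { intros u Hu. split; [apply exp_pos |]. unfold E; rewrite <- exp_0.
    destruct (Req_dec (- K * (u - t0)) 0) as [-> | Hne]; [lra |].
    left; apply exp_increasing; nra. }
  assert (HEt : E t * V t <= 0).
  { apply (nonpos_of_right_limit (fun u => E u * V u)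
             (fun c => E c * (- K) * V c + E c * Vd c) t0 t1); auto.
    - intros c Hc. destruct (HVd c Hc) as [HdV HVdc]. split.
      + apply (derivable_pt_lim_mult E V); auto.
        apply is_derive_Reals. unfold E. auto_derive; auto. replace (c + - t0) with (c - t0) by ring. ring.
      + destruct (HE c ltac:(lra)). nra.
    - intros eps Heps. destruct (Hlim eps Heps) as [d [Hd Hnear]].
      exists d; split; auto. intros u Hu.
      destruct (HE u ltac:(lra)). specialize (Hnear u Hu). specialize (HV u). nra. }
  destruct (HE t ltac:(lra)). specialize (HV t). nra.
Qed.

Lemma interval_induction (P : R -> Prop) T : 0 <= T -> P 0 ->
  (forall t, 0 < t <= T -> (forall u, 0 <= u < t -> P u) -> P t) ->
  (forall t, 0 <= t < T -> (forall u, 0 <= u <= t -> P u) ->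
     exists eta, eta > 0 /\ t + eta <= T /\ forall u, t <= u <= t + eta -> P u) ->
  forall t, 0 <= t <= T -> P t.
Proof.
  intros HT H0 Hclosed Hstep.
  set (E := fun t => 0 <= t <= T /\ forall u, 0 <= u <= t -> P u).
  assert (HE0 : E 0) by (split; [lra | intros u Hu; replace u with 0 by lra; auto]).
  assert (Hbound : bound E) by (exists T; intros t [Ht _]; lra).
  destruct (completeness E Hbound (ex_intro _ 0 HE0)) as [t0 [Hub Hlub]].
  assert (Ht0 : 0 <= t0 <= T) by (split; [apply Hub; auto | apply Hlub; intros t [Ht _]; lra]).
  assert (Hbelow : forall u, 0 <= u < t0 -> P u).
  { intros u Hu. destruct (classic (exists t, E t /\ u < t)) as [[t [[_ Ht] Hut]] | Hno].
    - apply Ht; lra.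
    - exfalso. assert (t0 <= u); [| lra]. apply Hlub. intros t Et.
      apply Rnot_lt_le; intros Hut. apply Hno; eauto. }
  assert (HEt0 : E t0).
  { split; auto. intros u Hu. destruct (Req_dec u t0) as [-> | Hne]; [| apply Hbelow; lra].
    destruct (Req_dec t0 0) as [-> | Hne0]; auto. apply Hclosed; auto; lra. }
  destruct (Req_dec t0 T) as [<- | HtT]; [intros t Ht; apply HEt0; lra |].
  destruct (Hstep t0 ltac:(lra) (proj2 HEt0)) as [eta [Heta [HetaT Hloc]]].
  assert (HE : E (t0 + eta)).
  { split; [lra |]. intros u Hu. destruct (Rle_lt_dec u t0); [apply HEt0 | apply Hloc]; lra. }
  pose proof (Hub _ HE). lra.
Qed.

Definition cont_on (T : R) (mu : R -> R) : Prop :=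
  forall t, 0 <= t <= T -> forall eps, eps > 0 -> exists d, d > 0 /\
    forall u, 0 <= u <= T -> Rabs (u - t) < d -> Rabs (mu u - mu t) < eps.

Definition vcont_within {n : nat} (T : R) (z : R -> Vec n) (t : R) : Prop :=
  forall eps, eps > 0 -> exists d, d > 0 /\
    forall u, 0 <= u <= T -> Rabs (u - t) < d -> vnorm (vsub (z u) (z t)) < eps.

Lemma eq_of_left_agree {n : nat} (z w : R -> Vec n) T t : 0 < t <= T ->
  vcont_within T z t -> vcont_within T w t -> (forall u, 0 <= u < t -> z u = w u) ->
  z t = w t.
Proof.
  intros Ht Hz Hw Hagree. apply vnorm_le0_eq. apply Rnot_lt_le; intros Hpos.
  set (a := vnorm (vsub (z t) (w t))) in *.
  destruct (Hz (a / 2) ltac:(lra)) as [dz [Hdz Hnz]].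
  destruct (Hw (a / 2) ltac:(lra)) as [dw [Hdw Hnw]].
  set (u := t - Rmin (Rmin dz dw) t / 2).
  assert (Hu : 0 <= u < t /\ t - u < dz /\ t - u < dw) by (unfold u, Rmin; repeat destruct Rle_dec; lra).
  assert (Hzu : vnorm (vsub (z u) (z t)) < a / 2) by (apply Hnz; [lra | rewrite Rabs_left; lra]).
  assert (Hwu : vnorm (vsub (w u) (w t)) < a / 2) by (apply Hnw; [lra | rewrite Rabs_left; lra]).
  pose proof (vnorm_triangle (z t) (z u) (w t)) as Htri.
  rewrite (vnorm_sym (z t) (z u)), (Hagree u ltac:(lra)) in Htri.
  rewrite (Hagree u ltac:(lra)) in Hzu.
  fold a in Htri. lra.
Qed.

Lemma vdot_sub_right_limit {n : nat} T (z w : R -> Vec n) t0 : 0 <= t0 < T ->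
  vcont_within T z t0 -> vcont_within T w t0 -> z t0 = w t0 ->
  forall eps, eps > 0 -> exists d, d > 0 /\
    forall u, t0 < u < t0 + d -> vdot (vsub (z u) (w u)) (vsub (z u) (w u)) < eps.
Proof.
  intros Ht0 Hz Hw Heq eps Heps.
  set (sm := Rmin 1 (eps / 8)).
  assert (Hsm : 0 < sm /\ sm <= 1 /\ sm <= eps / 8) by (unfold sm, Rmin; destruct Rle_dec; lra).
  destruct (Hz sm ltac:(lra)) as [dz [Hdz Hnz]].
  destruct (Hw sm ltac:(lra)) as [dw [Hdw Hnw]].
  exists (Rmin (Rmin dz dw) (T - t0)); split; [repeat apply Rmin_glb_lt; lra |].
  intros u Hu.
  assert (Hu' : u - t0 < dz /\ u - t0 < dw /\ u <= T)
    by (revert Hu; unfold Rmin; repeat destruct Rle_dec; lra).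
  assert (Hzu : vnorm (vsub (z u) (z t0)) < sm) by (apply Hnz; [lra | rewrite Rabs_right; lra]).
  assert (Hwu : vnorm (vsub (w u) (w t0)) < sm) by (apply Hnw; [lra | rewrite Rabs_right; lra]).
  pose proof (vnorm_triangle (z u) (z t0) (w u)) as Htri.
  rewrite Heq, (vnorm_sym (w t0) (w u)) in Htri. rewrite Heq in Hzu.
  pose proof (vdot_self_le (vsub (z u) (w u))). pose proof (vnorm_ge0 (vsub (z u) (w u))).
  nra.
Qed.

Lemma growth_bound {n : nat} (m B L : R) (e d : Vec n) : Rabs m <= B -> 0 <= L ->
  vnorm d <= L * vnorm e -> 2 * m * vdot e d <= 2 * B * L * INR n * vdot e e.
Proof.
  intros Hm HL Hd.
  assert (HB : 0 <= B) by (pose proof (Rabs_pos m); lra).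
  assert (Hmd : m * vdot e d <= B * (L * (vnorm e)^2)).
  { eapply Rle_trans; [apply Rle_abs |]. rewrite Rabs_mult.
    pose proof (Rabs_vdot_le e d). pose proof (vnorm_ge0 e).
    apply Rmult_le_compat; auto using Rabs_pos. simpl; nra. }
  assert (B * (L * (vnorm e)^2) <= B * (L * (INR n * vdot e e))).
  { apply Rmult_le_compat_l; auto. apply Rmult_le_compat_l; auto. apply vnorm_sqr_le. }
  lra.
Qed.

Section ODE.
Context {n s : nat} (h : Vec n -> Vec s -> Vec n) (p : Vec s) (z0 : Vec n) (T : R).

Lemma sol_derivable_interior mu z : is_sol_on h p z0 T mu z -> forall t, 0 < t < T ->
  forall i, derivable_pt_lim (fun u => z u i) t (mu t * h (z t) p i).
Proof.
  intros [_ Hz] t Ht i eps Heps. destruct (Hz t ltac:(lra) i eps Heps) as [d [Hd Hnear]].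
  assert (Hpos : 0 < Rmin d (Rmin t (T - t))) by (repeat apply Rmin_glb_lt; lra).
  exists (mkposreal _ Hpos). intros k Hk Hkd; simpl in Hkd.
  assert (Hkb : Rabs k < d /\ Rabs k < t /\ Rabs k < T - t)
    by (revert Hkd; unfold Rmin; repeat destruct Rle_dec; lra).
  destruct Hkb as [Hkd' [Hkt HkT]]. apply Rabs_def2 in Hkt. apply Rabs_def2 in HkT.
  specialize (Hnear (t + k)). replace (t + k - t) with k in Hnear by ring.
  apply Hnear; [lra | intro Hc; apply Hk; lra | auto].
Qed.

Lemma sol_vcont_within mu z : is_sol_on h p z0 T mu z -> forall t, 0 <= t <= T ->
  vcont_within T z t.
Proof.
  intros [_ Hz] t Ht eps Heps.
  assert (HN : 0 <= INR n) by apply pos_INR.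
  set (e := eps / (INR n + 1)). assert (He : 0 < e) by (apply Rdiv_lt_0_compat; lra).
  destruct (Idx_uniform_delta (fun i d => forall u, 0 <= u <= T -> Rabs (u - t) < d ->
      Rabs (z u i - z t i) <= e)) as [d [Hd Hcoord]].
  - intros i d d' Hdi Hd' u Hu Hud; apply Hdi; auto; lra.
  - intros i. set (a := mu t * h (z t) p i).
    destruct (Hz t Ht i 1 ltac:(lra)) as [d0 [Hd0 Hnear]].
    assert (Ha : 0 < Rabs a + 1) by (pose proof (Rabs_pos a); lra).
    exists (Rmin d0 (e / (Rabs a + 1))).
    split; [apply Rmin_glb_lt; [lra | apply Rdiv_lt_0_compat; lra] |].
    intros u Hu Hud.
    destruct (Req_dec u t) as [-> | Hne]; [rewrite Rminus_diag, Rabs_R0; lra |].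
    assert (Hud' : Rabs (u - t) < d0 /\ Rabs (u - t) < e / (Rabs a + 1))
      by (revert Hud; unfold Rmin; destruct Rle_dec; lra).
    specialize (Hnear u Hu Hne (proj1 Hud')). fold a in Hnear.
    assert (Hq : Rabs ((z u i - z t i) / (u - t)) <= Rabs a + 1).
    { pose proof (Rabs_triang_inv ((z u i - z t i) / (u - t)) a). lra. }
    replace (z u i - z t i) with ((z u i - z t i) / (u - t) * (u - t)) by (field; lra).
    rewrite Rabs_mult.
    apply Rle_trans with ((Rabs a + 1) * (e / (Rabs a + 1))); [| right; field; lra].
    apply Rmult_le_compat; try apply Rabs_pos; lra.
  - exists d; split; auto. intros u Hu Hud.
    apply Rle_lt_trans with (INR n * e); [apply vsum_le_const; intros; apply Hcoord; auto |].
    apply Rlt_le_trans with ((INR n + 1) * e); [apply Rmult_lt_compat_r; lra |].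
    right; unfold e; field; lra.
Qed.

Lemma sol_sq_dist_derivable mu z w : is_sol_on h p z0 T mu z -> is_sol_on h p z0 T mu w ->
  forall c, 0 < c < T ->
  derivable_pt_lim (fun u => vdot (vsub (z u) (w u)) (vsub (z u) (w u))) c
    (2 * mu c * vdot (vsub (z c) (w c)) (vsub (h (z c) p) (h (w c) p))).
Proof.
  intros Hz Hw c Hc.
  replace (2 * mu c * vdot (vsub (z c) (w c)) (vsub (h (z c) p) (h (w c) p)))
    with (vsum (fun i => (mu c * h (z c) p i - mu c * h (w c) p i) * (z c i - w c i)
                       + (z c i - w c i) * (mu c * h (z c) p i - mu c * h (w c) p i)))
    by (unfold vdot; rewrite <- vsum_scal; apply vsum_ext; intros i; unfold vsub; ring).
  apply vsum_derive; intros i.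
  apply (derivable_pt_lim_mult (fun u => z u i - w u i) (fun u => z u i - w u i));
    apply (derivable_pt_lim_minus (fun u => z u i) (fun u => w u i));
    apply sol_derivable_interior; auto.
Qed.

Hypothesis Hlip : locally_lipschitz (fun x => h x p).

Lemma sol_local_uniqueness mu z w : cont_on T mu ->
  is_sol_on h p z0 T mu z -> is_sol_on h p z0 T mu w ->
  forall t0, 0 <= t0 < T -> z t0 = w t0 ->
  exists eta, eta > 0 /\ t0 + eta <= T /\ forall t, t0 <= t <= t0 + eta -> z t = w t.
Proof.
  intros Hmu Hz Hw t0 Ht0 Heq.
  destruct (Hlip (z t0)) as [r [L [Hr [HL Hlipz]]]].
  destruct (Hmu t0 ltac:(lra) 1 ltac:(lra)) as [dm [Hdm Hnm]].
  destruct (sol_vcont_within mu z Hz t0 ltac:(lra) r Hr) as [dz [Hdz Hnz]].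
  destruct (sol_vcont_within mu w Hw t0 ltac:(lra) r Hr) as [dw [Hdw Hnw]].
  set (eta := Rmin (Rmin dm dz) (Rmin dw (T - t0)) / 2).
  assert (Heta : 0 < eta /\ eta < dm /\ eta < dz /\ eta < dw /\ eta < T - t0)
    by (unfold eta, Rmin; repeat destruct Rle_dec; lra).
  set (B := Rabs (mu t0) + 1).
  set (e := fun u => vsub (z u) (w u)).
  assert (Hsq : forall t, t0 < t <= t0 + eta -> vdot (e t) (e t) = 0).
  { apply (gronwall_zero _ (fun c => 2 * mu c * vdot (e c) (vsub (h (z c) p) (h (w c) p)))
             (2 * B * L * INR n)).
    - pose proof (pos_INR n). pose proof (Rabs_pos (mu t0)).
      unfold B; repeat apply Rmult_le_pos; lra.
    - intros u. apply vsum_nonneg; intros; apply Rle_0_sqr.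
    - apply (vdot_sub_right_limit T); auto.
      + apply (sol_vcont_within mu); auto; lra.
      + apply (sol_vcont_within mu); auto; lra.
    - intros c Hc. split; [apply sol_sq_dist_derivable; auto; lra |].
      apply growth_bound; auto.
      + assert (Rabs (mu c - mu t0) < 1) by (apply Hnm; [lra | rewrite Rabs_right; lra]).
        pose proof (Rabs_triang_inv (mu c) (mu t0)). unfold B; lra.
      + apply Hlipz.
        * rewrite Heq. apply Hnw; [lra | rewrite Rabs_right; lra].
        * apply Hnz; [lra | rewrite Rabs_right; lra]. }
  exists eta; split; [lra | split; [lra |]].
  intros t Ht. destruct (Req_dec t t0) as [-> | Hne]; auto.
  apply vnorm_le0_eq. specialize (Hsq t ltac:(lra)).
  pose proof (vnorm_sqr_le (e t)). pose proof (vnorm_ge0 (e t)). fold (e t). nra.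
Qed.

Lemma sol_unique mu z w : cont_on T mu -> 0 <= T ->
  is_sol_on h p z0 T mu z -> is_sol_on h p z0 T mu w ->
  forall t, 0 <= t <= T -> z t = w t.
Proof.
  intros Hmu HT Hz Hw. apply interval_induction; auto.
  - destruct Hz as [-> _], Hw as [-> _]; auto.
  - intros t Ht Hbelow. apply (eq_of_left_agree z w T); auto.
    + apply (sol_vcont_within mu); auto; lra.
    + apply (sol_vcont_within mu); auto; lra.
  - intros t Ht Hupto. apply (sol_local_uniqueness mu); auto. apply Hupto; lra.
Qed.

End ODE.

(** * The time change *)

Definition clamp (T u : R) := Rmax 0 (Rmin T u).

Lemma clamp_in T u : 0 <= T -> 0 <= clamp T u <= T.
Proof. intros; unfold clamp, Rmax, Rmin; repeat destruct Rle_dec; lra. Qed.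

Lemma clamp_id T u : 0 <= u <= T -> clamp T u = u.
Proof. intros; unfold clamp, Rmax, Rmin; repeat destruct Rle_dec; lra. Qed.

Lemma clamp_lipschitz T u v : 0 <= T -> Rabs (clamp T u - clamp T v) <= Rabs (u - v).
Proof.
  intros; unfold clamp, Rmax, Rmin; repeat destruct Rle_dec;
    unfold Rabs; repeat destruct Rcase_abs; lra.
Qed.

(* [mu] is extended to all of [R] by clamping, so that Coquelicot's FTC applies everywhere. *)
Definition time_change (T : R) (mu : R -> R) (t : R) : R := RInt (fun u => mu (clamp T u)) 0 t.

Section TimeChange.
Variables (T : R) (mu : R -> R).
Hypotheses (HT : 0 <= T) (Hmu : cont_on T mu).

Lemma continuous_clamped x : continuous (fun u => mu (clamp T u)) x.
Proof.
  apply continuity_pt_filterlim.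
  unfold continuity_pt, continue_in, limit1_in, limit_in; simpl; unfold Rdist.
  intros eps Heps. destruct (Hmu (clamp T x) (clamp_in T x HT) eps Heps) as [d [Hd Hnear]].
  exists d; split; auto. intros u [_ Hu]. apply Hnear; [apply clamp_in; auto |].
  eapply Rle_lt_trans; [apply clamp_lipschitz; auto | exact Hu].
Qed.

Lemma ex_RInt_clamped a b : ex_RInt (fun u => mu (clamp T u)) a b.
Proof. apply (ex_RInt_continuous (V := R_CompleteNormedModule)); intros; apply continuous_clamped. Qed.

Lemma time_change_derive t : derivable_pt_lim (time_change T mu) t (mu (clamp T t)).
Proof.
  apply is_derive_Reals, (is_derive_RInt (fun u => mu (clamp T u)) _ 0 t).
  - apply filter_forall; intros; apply (RInt_correct (V := R_CompleteNormedModule)), ex_RInt_clamped.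
  - apply continuous_clamped.
Qed.

Lemma time_change_sol {n s : nat} (h : Vec n -> Vec s -> Vec n) p z0 zhat :
  is_global_sol h p z0 zhat -> is_sol_on h p z0 T mu (fun t => zhat (time_change T mu t)).
Proof.
  intros [Hz0 Hzhat]. split; [unfold time_change; rewrite RInt_point; exact Hz0 |].
  intros t Ht i eps Heps.
  pose proof (derivable_pt_lim_comp _ (fun x => zhat x i) t _ _ (time_change_derive t)
      (Hzhat (time_change T mu t) i)) as Hcomp.
  rewrite (clamp_id T t Ht) in Hcomp.
  destruct (Hcomp eps Heps) as [d Hd]. exists (pos d); split; [apply cond_pos |].
  intros u Hu Hne Hud. specialize (Hd (u - t) ltac:(lra) Hud).
  unfold comp in Hd. replace (t + (u - t)) with u in Hd by ring.
  rewrite Rmult_comm. exact Hd.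
Qed.

(* Integrating [(mu t - c)^2 >= 0]; for the optimal [c] this is Cauchy-Schwarz. *)
Lemma time_change_le_energy C1 c : energy_eq T C1 mu ->
  2 * c * time_change T mu T <= C1 + T * c ^ 2.
Proof.
  intros [pr Hpr].
  set (mt := fun u => mu (clamp T u)). set (I := time_change T mu T).
  assert (Hsq : is_RInt (fun u => mt u ^ 2) 0 T C1).
  { apply (is_RInt_ext (fun u => mu u ^ 2)).
    { intros x Hx. rewrite Rmin_left, Rmax_right in Hx by lra. unfold mt; rewrite clamp_id; auto; lra. }
    rewrite <- Hpr, <- RInt_Reals.
    apply (RInt_correct (V := R_CompleteNormedModule)), ex_RInt_Reals_1; auto. }
  assert (Hlin : is_RInt mt 0 T I) by apply (RInt_correct (V := R_CompleteNormedModule)), ex_RInt_clamped.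
  pose proof (is_RInt_plus _ _ _ _ _ _ (is_RInt_minus _ _ _ _ _ _ Hsq (is_RInt_scal _ _ _ (2 * c) _ Hlin))
     (is_RInt_const 0 T (c * c))) as Hdev.
  assert (Hdev' : is_RInt (fun u => (mt u - c) * (mt u - c)) 0 T (C1 - 2 * c * I + (T - 0) * (c * c))).
  { eapply is_RInt_ext; [| exact Hdev]. intros x _.
    unfold plus, minus, scal, opp, mult; simpl.
    change (mt x * (mt x * 1) + - ((2 * c) * mt x) + c * c = (mt x - c) * (mt x - c)). ring. }
  assert (0 <= C1 - 2 * c * I + (T - 0) * (c * c)).
  { rewrite <- (is_RInt_unique _ _ _ _ Hdev'). apply RInt_ge_0; [lra | eexists; exact Hdev' |].
    intros; apply Rle_0_sqr. }
  simpl; lra.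
Qed.

Lemma time_change_ge m : (forall t, 0 <= t <= T -> m <= mu t) -> m * T <= time_change T mu T.
Proof.
  intros Hm. unfold time_change.
  replace (m * T) with (RInt (fun _ => m) 0 T)
    by (rewrite RInt_const; unfold scal; simpl; unfold mult; simpl; ring).
  apply RInt_le; [lra | apply ex_RInt_const | apply ex_RInt_clamped |].
  intros x Hx. rewrite clamp_id by lra. apply Hm; lra.
Qed.

End TimeChange.

Lemma time_change_const T c : time_change T (fun _ => c) T = c * T.
Proof. unfold time_change. rewrite RInt_const. unfold scal; simpl; unfold mult; simpl. ring. Qed.

Lemma time_change_near T C1 c : 0 < T -> 0 < c -> c * c * T = C1 ->
  forall eps, eps > 0 -> exists delta, delta > 0 /\ forall mu,
    cont_on T mu -> energy_eq T C1 mu -> sup_dist_lt T mu c delta ->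
    c * T - eps < time_change T mu T <= c * T.
Proof.
  intros HT Hc HC1 eps Heps. exists (eps / T); split; [apply Rdiv_lt_0_compat; lra |].
  intros mu Hmu Henergy [M [HMd HM]].
  pose proof (time_change_le_energy T mu ltac:(lra) Hmu C1 c Henergy) as Hup.
  assert (Hlow : (c - M) * T <= time_change T mu T).
  { apply time_change_ge; auto; try lra. intros t Ht. specialize (HM t Ht).
    pose proof (Rle_abs (- (mu t - c))). rewrite Rabs_Ropp in H. lra. }
  assert (M * T < eps).
  { apply (Rmult_lt_compat_r T) in HMd; [| lra]. replace (eps / T * T) with eps in HMd by (field; lra). lra. }
  split; [nra |]. apply (Rmult_le_reg_l (2 * c)); [lra |]. simpl in Hup. nra.
Qed.

Lemma cont_on_const T c : cont_on T (fun _ => c).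
Proof. intros t _ e He. exists 1; split; [lra | intros; rewrite Rminus_diag, Rabs_R0; lra]. Qed.

Lemma sol_endpoint {n s : nat} (h : Vec n -> Vec s -> Vec n) p z0 zhat T mu z : 0 <= T ->
  locally_lipschitz (fun x => h x p) -> is_global_sol h p z0 zhat ->
  cont_on T mu -> is_sol_on h p z0 T mu z -> z T = zhat (time_change T mu T).
Proof.
  intros HT Hlip Hzhat Hmu Hz.
  apply (sol_unique h p z0 T Hlip mu z (fun t => zhat (time_change T mu t))); auto; try lra.
  apply time_change_sol; auto.
Qed.

Lemma sqrt_energy T C1 : T > 0 -> C1 > 0 ->
  0 < sqrt (C1 / T) /\ sqrt (C1 / T) * sqrt (C1 / T) * T = C1 /\ sqrt (C1 * T) = sqrt (C1 / T) * T.
Proof.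
  intros HT HC1.
  assert (Hpos : 0 < sqrt (C1 / T)) by (apply sqrt_lt_R0, Rdiv_lt_0_compat; lra).
  assert (Hsq : sqrt (C1 / T) * sqrt (C1 / T) * T = C1)
    by (rewrite sqrt_sqrt by (apply Rlt_le, Rdiv_lt_0_compat; lra); field; lra).
  split; [| split]; auto.
  rewrite <- Hsq at 1. replace (sqrt (C1 / T) * sqrt (C1 / T) * T * T) with ((sqrt (C1 / T) * T) ^ 2) by ring.
  apply sqrt_pow2; nra.
Qed.

Theorem mainTheorem8
  (n s : nat) (Hn : (1 <= n)%nat) (Hs : (1 <= s)%nat)
  (p : Vec s) (z0 : Vec n)
  (h : Vec n -> Vec s -> Vec n) (Hh : C1_first_arg h)
  (zhat : R -> Vec n)
  (Hzhat : is_global_sol h p z0 zhat)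
  (Hzhat_uniq : forall w, is_global_sol h p z0 w -> forall t, w t = zhat t)
  (Phi : Vec n -> R) (gradPhi : Vec n -> Vec n) (HPhi : C1_with_grad Phi gradPhi)
  (T C1 : R) (HT : T > 0) (HC1 : C1 > 0) :
  let mustar := sqrt (C1 / T) in
  let taustar := sqrt (C1 * T) in
  let Phih := vdot (gradPhi (zhat taustar)) (h (zhat taustar) p) in
  (Phih > 0 ->
     exists delta, delta > 0 /\
       forall (mu : R -> R) (z zs : R -> Vec n),
         cont_pos_on T mu -> energy_eq T C1 mu -> sup_dist_lt T mu mustar delta ->
         is_sol_on h p z0 T mu z ->
         is_sol_on h p z0 T (fun _ => mustar) zs ->
         Phi (z T) <= Phi (zs T)) /\
  (Phih < 0 ->
     exists delta, delta > 0 /\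
       forall (mu : R -> R) (z zs : R -> Vec n),
         cont_pos_on T mu -> energy_eq T C1 mu -> sup_dist_lt T mu mustar delta ->
         is_sol_on h p z0 T mu z ->
         is_sol_on h p z0 T (fun _ => mustar) zs ->
         Phi (z T) >= Phi (zs T)).
Proof.
  intros ms ts Phih.
  destruct Hh as [Dh HDh]. destruct (HDh p) as [HDp HDc].
  pose proof (C1_locally_lipschitz (fun x => h x p) _ HDp HDc) as Hlip.
  destruct (sqrt_energy T C1 HT HC1) as [Hms [HC1ms Hts]]; fold ms ts in Hms, HC1ms, Hts.
  assert (Hreduce : forall rel : R -> R -> Prop,
      (exists eps, eps > 0 /\ forall t, ts - eps < t <= ts -> rel (Phi (zhat t)) (Phi (zhat ts))) ->
      exists delta, delta > 0 /\ forall mu z zs,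
        cont_pos_on T mu -> energy_eq T C1 mu -> sup_dist_lt T mu ms delta ->
        is_sol_on h p z0 T mu z -> is_sol_on h p z0 T (fun _ => ms) zs -> rel (Phi (z T)) (Phi (zs T))).
  { intros rel [eps [Heps Hrel]].
    destruct (time_change_near T C1 ms HT Hms HC1ms eps Heps) as [delta [Hdelta Hnear]].
    exists delta; split; auto. intros mu z zs [_ Hmu] Henergy Hdist Hz Hzs.
    rewrite (sol_endpoint h p z0 zhat T mu z), (sol_endpoint h p z0 zhat T (fun _ => ms) zs),
      time_change_const, <- Hts; auto using cont_on_const; try lra.
    apply Hrel. rewrite Hts. auto. }
  destruct HPhi as [Hpartial Hgrad].
  assert (Hder : derivable_pt_lim (fun u => Phi (zhat u)) ts Phih).
  { apply chain_rule; auto. intros i. apply (proj2 Hzhat). }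
  split; intros Hsign; apply Hreduce.
  - exact (derivable_pt_lim_pos_left_le _ ts Phih Hder Hsign).
  - destruct (derivable_pt_lim_pos_left_le (fun u => - Phi (zhat u)) ts (- Phih)
                (derivable_pt_lim_opp _ _ _ Hder) ltac:(lra)) as [eps [Heps Hle]].
    exists eps; split; auto. intros t Ht. specialize (Hle t Ht). simpl in Hle. lra.
Qed.
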